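(* Let $G$ be a $(C_4,\text{diamond})$-free graph and let $AB$ and $A'B'$ be two edges of $F_k(G)$ in the same ladder class. Then $A\triangle B=A'\triangle B'$.
   Context: $F_k(G)$ is the graph on the $k$-subsets of $V(G)$ with $A,B$ adjacent iff $A\triangle B$ is an edge of $G$. A diamond is $K_4$ minus an edge; $(C_4,\text{diamond})$-free means no induced $4$-cycle and no induced diamond. A ladder is a graph isomorphic to $K_2\square P_m$ (Cartesian product of an edge with vertices $x,y$ and a path $P_m$ with $m\ge1$ edges and vertices $v_1,\dots,v_{m+1}$); for $m\ge2$ its rungs are the edges $(x,v_i)(y,v_i)$, and for $m=1$ the rungs may be either of the two pairs of disjoint edges of the $4$-cycle. Two edges $e,f$ of a graph $F$ are connected by a ladder if some induced subgraph of $F$ isomorphic to a ladder has $e$ and $f$ as rungs. The ladder classes of $F$ are the equivalence classes of the (smallest equivalence relation containing the) relation ''connected by a ladder'' on $E(F)$. *)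

From Stdlib Require Import Relations.
From mathcomp Require Import all_boot.
Set Implicit Arguments. Unset Strict Implicit. Unset Printing Implicit Defensive.

Definition simple_graph (T : finType) (g : rel T) : Prop :=
  symmetric g /\ irreflexive g.

Definition C4_free (T : finType) (g : rel T) : Prop :=
  ~ exists a b c d : T,
      [/\ uniq [:: a; b; c; d],
          [&& g a b, g b c, g c d & g d a],
          ~~ g a c & ~~ g b d].

Definition diamond_free (T : finType) (g : rel T) : Prop :=
  ~ exists a b c d : T,
      [/\ uniq [:: a; b; c; d],
          [&& g a b, g b c, g c d, g d a & g a c] & ~~ g b d].

Definition symdiff (T : finType) (A B : {set T}) : {set T} :=
  (A :\: B) :|: (B :\: A).

Definition is_edge (T : finType) (g : rel T) (S : {set T}) : Prop :=
  exists u v, g u v /\ S = [set u; v].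

(* Adjacency of the k-token graph F_k(G), on vertex type {set T}
   (only k-subsets are vertices). *)
Definition tok_adj (T : finType) (g : rel T) (k : nat) (A B : {set T}) : Prop :=
  [/\ #|A| = k, #|B| = k & is_edge g (symdiff A B)].

(* Adjacency of the ladder K_2 \square P_m on bool * 'I_(m+1). *)
Definition ladder_adj (m : nat) (p q : bool * 'I_m.+1) : bool :=
  ((p.1 == q.1) && ((p.2.+1 == q.2 :> nat) || (q.2.+1 == p.2 :> nat)))
  || ((p.1 != q.1) && (p.2 == q.2)).

(* For m = 1 every isomorphism of the 4-cycle is allowed, so both pairs of
   disjoint edges arise as rungs. *)
Definition ladder_connected (V : finType) (F : V -> V -> Prop)
    (e f : {set V}) : Prop :=
  exists m : nat, exists phi : bool * 'I_m.+1 -> V,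
    [/\ 1 <= m, injective phi,
        (forall p q, F (phi p) (phi q) <-> ladder_adj p q) &
        exists i j : 'I_m.+1,
          e = [set phi (false, i); phi (true, i)] /\
          f = [set phi (false, j); phi (true, j)]].

Definition same_ladder_class (V : finType) (F : V -> V -> Prop)
    (e f : {set V}) : Prop :=
  clos_refl_sym_trans _ (ladder_connected F) e f.

(* Every edge AB of F_k(G) moves one token along the edge A △ B of G, its label.
   Around an induced 4-cycle X0 Y0 Y1 X1 of F_k(G), the labels l1 = X0 △ Y0,
   l2 = X0 △ X1, l3 = Y0 △ Y1, l4 = X1 △ Y1 satisfy l1 △ l3 = l2 △ l4 = X0 △ Y1,
   and neither X0 △ Y1 nor Y0 △ X1 = l1 △ l2 is an edge of G.  In a
   (C4, diamond)-free graph two distinct non-adjacent vertices have at most one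
   common neighbour.  If l1 and l3 share a vertex, l1 △ l3 = {x, y} is such a
   pair, and l1, l3 as well as l2, l4 form paths x - w - y through a common
   neighbour w; uniqueness of w forces l2 to be l1 or l3, and l2 <> l1 since
   Y0 <> X1.  The same argument applies with l2 and l3 exchanged, and if l1
   meets neither of them, counting shows l2 = l3.  So opposite sides of the
   4-cycle carry the same label: consecutive rungs of a ladder have equal
   labels, and the label is constant on ladder classes. *)

From Stdlib Require Import Relations.
From mathcomp Require Import all_boot zify.
Set Implicit Arguments. Unset Strict Implicit. Unset Printing Implicit Defensive.

Section SymmetricDifference.
Variable T : finType.
Implicit Types A B C D : {set T}.

Lemma in_symdiff A B z : (z \in symdiff A B) = (z \in A) (+) (z \in B).
Proof. by rewrite !inE; case: (z \in A); case: (z \in B). Qed.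

Lemma symdiffC A B : symdiff A B = symdiff B A.
Proof. by rewrite /symdiff setUC. Qed.

Lemma symdiff_trans A B C : symdiff (symdiff A B) (symdiff B C) = symdiff A C.
Proof.
apply/setP => z; rewrite !in_symdiff.
by case: (z \in A); case: (z \in B); case: (z \in C).
Qed.

Lemma symdiffI A : injective (symdiff A).
Proof.
move=> B C /setP E; apply/setP => z.
by move: (E z); rewrite !in_symdiff => /addbI.
Qed.

Lemma symdiff_exchange A B C D :
  symdiff A B = symdiff C D -> symdiff A C = symdiff B D.
Proof.
move=> /setP E; apply/setP => z; move: (E z); rewrite !in_symdiff.
by case: (z \in A); case: (z \in B); case: (z \in C); case: (z \in D).
Qed.

Lemma card_symdiff A B : #|symdiff A B| + (#|A :&: B|).*2 = #|A| + #|B|.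
Proof.
have -> : symdiff A B = (A :|: B) :\: (A :&: B).
  by apply/setP => z; rewrite in_symdiff !inE; case: (z \in A); case: (z \in B).
have sIU := subset_trans (subsetIl A B) (subsetUl A B).
by rewrite cardsDS //; have := cardsUI A B; have := subset_leq_card sIU; lia.
Qed.

Lemma card_meet_symdiff A B C D :
  #|A| + #|C| = #|B| + #|D| -> symdiff A C = symdiff B D ->
  #|A :&: C| = #|B :&: D|.
Proof.
by move=> cards E; have := card_symdiff A C; rewrite E cards -card_symdiff; lia.
Qed.

Lemma set2_eq (a b c d : T) :
  [set a; b] = [set c; d] -> (a = c /\ b = d) \/ (a = d /\ b = c).
Proof.
move=> E; have /set2P [ac|ad] : a \in [set c; d] by rewrite -E set21.
- subst c; have /set2P [da|->] : d \in [set a; b] by rewrite E set22.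
  + subst d; have /set2P [->|->] : b \in [set a; a] by rewrite -E set22.
    1,2: by left.
  + by left.
- subst d; have /set2P [ca|->] : c \in [set a; b] by rewrite E set21.
  + subst c; have /set2P [->|->] : b \in [set a; a] by rewrite -E set22.
    1,2: by right.
  + by right.
Qed.

Lemma card2_meet_le1 A B : #|A| = 2 -> #|B| = 2 -> A != B -> #|A :&: B| <= 1.
Proof.
move=> cA cB; apply: contraNT; rewrite -ltnNge => meet2.
have cAB : #|A :&: B| = 2.
  by apply/eqP; rewrite eqn_leq meet2 -cA subset_leq_card ?subsetIl.
have /eqP <- : A :&: B == A by rewrite eqEcard subsetIl cA cAB.
by rewrite eqEcard subsetIr cB cAB.
Qed.

Lemma card2_meet1 A B : #|A| = 2 -> #|B| = 2 -> #|A :&: B| = 1 ->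
  exists x y w, [/\ x != y, A = [set x; w], B = [set y; w]
                  & symdiff A B = [set x; y]].
Proof.
move=> cA cB /eqP/cards1P [w AB].
have /setIP [wA wB] : w \in A :&: B by rewrite AB set11.
have /cards1P [x Ax] : #|A :\ w| == 1.
  by move: cA; rewrite (cardsD1 w) wA add1n => -[->].
have /cards1P [y By] : #|B :\ w| == 1.
  by move: cB; rewrite (cardsD1 w) wB add1n => -[->].
have xA : x \in A :\ w by rewrite Ax set11.
have yB : y \in B :\ w by rewrite By set11.
have eA : A = [set x; w] by rewrite -(setD1K wA) Ax setUC.
have eB : B = [set y; w] by rewrite -(setD1K wB) By setUC.
have xw : x != w by move: xA; rewrite !inE => /andP [].
have yw : y != w by move: yB; rewrite !inE => /andP [].
have xy : x != y.
  apply: contra_neq xw => exy; apply/set1P; rewrite -AB !inE.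
  by move: xA yB; rewrite !inE exy => /andP [_ ->] /andP [_ ->].
exists x, y, w; split => //; rewrite eA eB; apply/setP => z.
rewrite in_symdiff !inE.
case: (eqVneq z w) => [->|_].
  by rewrite !(eq_sym w) (negbTE xw) (negbTE yw).
by rewrite !orbF; case: (eqVneq z x) => [->|//]; rewrite (negbTE xy).
Qed.

(* The label of the edge {A, B} of F_k(G), extended to all sets of sets since
   the ladder-class closure passes through arbitrary ones. *)
Definition edge_label (e : {set {set T}}) : {set T} :=
  \bigcup_(X in e) X :\: \bigcap_(X in e) X.

Lemma edge_label_set2 A B : edge_label [set A; B] = symdiff A B.
Proof.
rewrite /edge_label bigcup_setU bigcap_setU !big_set1.
by apply/setP => z; rewrite !inE; case: (z \in A); case: (z \in B).
Qed.
End SymmetricDifference.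

Definition unique_common_neighbour (T : finType) (g : rel T) : Prop :=
  forall x y w w', x != y -> ~~ g x y ->
    g x w -> g w y -> g x w' -> g w' y -> w = w'.

Lemma C4_diamond_free_unique_common_neighbour (T : finType) (g : rel T) :
  simple_graph g -> C4_free g -> diamond_free g -> unique_common_neighbour g.
Proof.
move=> [gsym girr] c4 dm x y w w' xy nxy xw wy xw' w'y.
case: (eqVneq w w') => // ww'; exfalso.
have neq u v : g u v -> u != v by apply: contraTneq => ->; rewrite girr.
have [[[nxw nwy] nxw'] nw'y] :=
  (neq _ _ xw, neq _ _ wy, neq _ _ xw', neq _ _ w'y).
case gww' : (g w w').
- apply: dm; exists w, x, w', y; split => //.
  + by rewrite /= !inE !negb_or [w == x]eq_sym nxw ww' nwy nxw' xy nw'y.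
  + by rewrite [g w x]gsym xw xw' w'y [g y w]gsym wy gww'.
- apply: c4; exists x, w, y, w'; split; last by rewrite gww'.
  + by rewrite /= !inE !negb_or nxw xy nxw' nwy ww' [y == w']eq_sym nw'y.
  + by rewrite xw wy [g y w']gsym w'y [g w' x]gsym xw'.
  + by [].
Qed.

Section TokenGraphLabels.
Variables (T : finType) (g : rel T).
Hypotheses (gsym : symmetric g) (girr : irreflexive g).
Hypothesis g_ucn : unique_common_neighbour g.
Implicit Types l : {set T}.

Lemma is_edge_set2 x y : is_edge g [set x; y] <-> g x y.
Proof.
split=> [[u [v [guv /set2_eq [[-> ->]|[-> ->]]]]] | gxy] //.
- by rewrite gsym.
- by exists x, y.
Qed.

Lemma is_edge_card l : is_edge g l -> #|l| = 2.
Proof.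
by case=> u [v [guv ->]]; rewrite cards2; case: eqVneq guv => // ->; rewrite girr.
Qed.

Lemma edge_square_meet1 l1 l2 l3 l4 :
  is_edge g l1 -> is_edge g l2 -> is_edge g l3 -> is_edge g l4 ->
  symdiff l1 l3 = symdiff l2 l4 -> ~ is_edge g (symdiff l1 l3) ->
  #|l1 :&: l3| = 1 -> l2 = l1 \/ l2 = l3.
Proof.
move=> e1 e2 e3 e4 E nD m13.
have [[[c1 c2] c3] c4] :=
  (is_edge_card e1, is_edge_card e2, is_edge_card e3, is_edge_card e4).
have m24 : #|l2 :&: l4| = 1 by rewrite -(card_meet_symdiff _ E) // c1 c2 c3 c4.
have [x [y [w [xy el1 el3 D]]]] := card2_meet1 c1 c3 m13.
have [x' [y' [w' [_ el2 el4 D']]]] := card2_meet1 c2 c4 m24.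
have nxy : ~~ g x y by apply/negP => /is_edge_set2 exy; apply: nD; rewrite D.
have xw : g x w by apply/is_edge_set2; rewrite -el1.
have wy : g w y by rewrite gsym; apply/is_edge_set2; rewrite -el3.
have x'w' : g x' w' by apply/is_edge_set2; rewrite -el2.
have y'w' : g y' w' by apply/is_edge_set2; rewrite -el4.
rewrite el1 el2 el3.
have : [set x; y] = [set x'; y'] by rewrite -D -D' E.
case/set2_eq => -[ex ey]; subst x' y'.
- by left; rewrite (g_ucn xy nxy xw wy x'w') // gsym.
- by right; rewrite (g_ucn xy nxy xw wy y'w') // gsym.
Qed.

Lemma edge_square l1 l2 l3 l4 :
  is_edge g l1 -> is_edge g l2 -> is_edge g l3 -> is_edge g l4 ->
  symdiff l1 l3 = symdiff l2 l4 -> l1 != l3 -> l1 != l2 ->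
  ~ is_edge g (symdiff l1 l3) -> ~ is_edge g (symdiff l1 l2) -> l1 = l4.
Proof.
move=> e1 e2 e3 e4 E n13 n12 nD nD'.
suff l23 : l2 = l3 by apply: (symdiffI (A := l3)); rewrite symdiffC E l23.
have [[[c1 c2] c3] c4] :=
  (is_edge_card e1, is_edge_card e2, is_edge_card e3, is_edge_card e4).
have [m13|m13] : #|l1 :&: l3| = 1 \/ #|l1 :&: l3| = 0.
  by have := card2_meet_le1 c1 c3 n13; lia.
  case: (edge_square_meet1 e1 e2 e3 e4 E nD m13) => // l21.
  by rewrite l21 eqxx in n12.
have [m12|m12] : #|l1 :&: l2| = 1 \/ #|l1 :&: l2| = 0.
  by have := card2_meet_le1 c1 c2 n12; lia.
  have E' := symdiff_exchange E.
  case: (edge_square_meet1 e1 e3 e2 e4 E' nD' m12) => // l31.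
  by rewrite l31 eqxx in n13.
have m24 : #|l2 :&: l4| = 0 by rewrite -(card_meet_symdiff _ E) // c1 c2 c3 c4.
have d12 : [disjoint l1 & l2] by rewrite -setI_eq0 -cards_eq0 m12.
have d24 : [disjoint l2 & l4] by rewrite -setI_eq0 -cards_eq0 m24.
apply/eqP; rewrite eqEcard c2 c3 leqnn andbT; apply/subsetP => z z2.
have : z \in symdiff l1 l3 by rewrite E in_symdiff z2 (disjointFr d24 z2).
by rewrite in_symdiff (disjointFl d12 z2).
Qed.

Lemma token_square k X0 Y0 X1 Y1 :
  tok_adj g k X0 Y0 -> tok_adj g k X0 X1 -> tok_adj g k Y0 Y1 ->
  tok_adj g k X1 Y1 -> ~ tok_adj g k X0 Y1 -> ~ tok_adj g k Y0 X1 ->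
  X0 != Y1 -> Y0 != X1 -> symdiff X0 Y0 = symdiff X1 Y1.
Proof.
move=> [cX0 cY0 e1] [_ cX1 e2] [_ cY1 e3] [_ _ e4] nD nD' dD dD'.
have D : symdiff (symdiff X0 Y0) (symdiff Y0 Y1) = symdiff X0 Y1.
  exact: symdiff_trans.
have D' : symdiff (symdiff X0 Y0) (symdiff X0 X1) = symdiff Y0 X1.
  by rewrite (symdiffC X0) symdiff_trans.
apply: (edge_square e1 e2 e3 e4).
- by rewrite D symdiff_trans.
- by apply: contra_neq dD; rewrite symdiffC => /symdiffI.
- by apply: contra_neq dD' => /symdiffI.
- by rewrite D => eD; apply: nD.
- by rewrite D' => eD'; apply: nD'.
Qed.

Lemma ladder_connected_label k e f :
  ladder_connected (tok_adj g k) e f -> edge_label e = edge_label f.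
Proof.
case=> m [phi [_ phi_inj phi_adj [i [j [-> ->]]]]].
pose rung n := symdiff (phi (false, inord n)) (phi (true, inord n)).
have rung_ord (r : 'I_m.+1) :
    edge_label [set phi (false, r); phi (true, r)] = rung r.
  by rewrite edge_label_set2 /rung inord_val.
have rungS n : n < m -> rung n = rung n.+1.
  move=> lt_nm; have le_nm : n < m.+1 by apply: ltnW.
  apply: (token_square (k := k)).
  1-4: by apply/phi_adj; rewrite /ladder_adj /= ?inordK ?eqxx ?orbT.
  1,2: move/phi_adj; rewrite /ladder_adj /= => /eqP/(congr1 val).
  1,2: by rewrite /= !inordK //; lia.
  1,2: by apply/eqP => /phi_inj.
have rung0 n : n <= m -> rung n = rung 0.
  by elim: n => // n IH lt_nm; rewrite -rungS // IH // ltnW.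
by rewrite !rung_ord !rung0 // -ltnS.
Qed.
End TokenGraphLabels.

Unset Implicit Arguments.

Theorem proposition23 (T : finType) (g : rel T) (k : nat)
    (A B A' B' : {set T}) :
  simple_graph g -> C4_free g -> diamond_free g ->
  tok_adj g k A B -> tok_adj g k A' B' ->
  same_ladder_class (tok_adj g k) [set A; B] [set A'; B'] ->
  symdiff A B = symdiff A' B'.
Proof.
move=> g_simple c4 dm _ _.
have [gsym girr] := g_simple.
have g_ucn := C4_diamond_free_unique_common_neighbour g_simple c4 dm.
rewrite -!edge_label_set2.
elim=> [e f /(ladder_connected_label gsym girr g_ucn) | e | e f _ -> |
        e f _ _ -> _ ->] //.
Qed.
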